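(* Let $\varepsilon_1,\varepsilon_2>0$ and $\varepsilon=\varepsilon_1+\varepsilon_2$. For a dataset $D=\{(x_i,y_i)\}_{i=1}^n$ with $x_i,y_i\in[0,1]$, let $S_{x^2}=\sum_i x_i^2$, $S_{x-x^2}=\sum_i (x_i-x_i^2)$, $S_{1-x}=\sum_i(1-x_i)$, $S_{xy}=\sum_i x_iy_i$, $S_{(1-x)y}=\sum_i (1-x_i)y_i$, $S_{1-y}=\sum_i(1-y_i)$. Let $Z_{11},Z_{12},Z_{13}$ be i.i.d. $\mathrm{Lap}(1/\varepsilon_1)$, let $Z_{21},Z_{22},Z_{23}$ be i.i.d. $\mathrm{Lap}(1/\varepsilon_2)$, with the two groups independent of each other. Then the mechanism releasing $\mathcal{M}(D)=\bigl(S_{x^2}+Z_{11},\,S_{x-x^2}+Z_{12},\,S_{1-x}+Z_{13},\,S_{xy}+Z_{21},\,S_{(1-x)y}+Z_{22},\,S_{1-y}+Z_{23}\bigr)$ satisfies $\varepsilon$-differential privacy.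
   Context: $\mathrm{Lap}(b)$ denotes the zero-mean Laplace distribution with density $\frac{1}{2b}e^{-|z|/b}$. Two datasets are neighboring ($D\sim D'$) if one is obtained from the other by adding or removing a single record in $[0,1]^2$. A randomized mechanism $\mathcal{M}$ satisfies $\varepsilon$-differential privacy (pure DP) if for all neighboring $D\sim D'$ and all measurable sets $S$ of outputs, $\Pr[\mathcal{M}(D)\in S]\le e^{\varepsilon}\Pr[\mathcal{M}(D')\in S]$. *)

From HB Require Import structures.
From mathcomp Require Import all_boot all_order all_algebra.
From mathcomp Require Import all_classical all_reals all_analysis.
Set Implicit Arguments. Unset Strict Implicit. Unset Printing Implicit Defensive.
Import Order.TTheory GRing.Theory Num.Theory.
Local Open Scope classical_set_scope.
Local Open Scope ring_scope.

Section DP.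
Variable R : realType.

Definition lap_pdf (b : R) (z : R) : R := (2 * b)^-1 * expR (- `|z| / b).

Definition in_unit_square (p : R * R) : Prop :=
  0 <= p.1 <= 1 /\ 0 <= p.2 <= 1.
Definition valid_dataset (D : seq (R * R)) : Prop :=
  forall p, p \in D -> in_unit_square p.

Definition neighboring (D D' : seq (R * R)) : Prop :=
  exists (r : R * R) (D1 D2 : seq (R * R)),
    in_unit_square r /\
    ((D = D1 ++ D2 /\ D' = D1 ++ r :: D2) \/
     (D' = D1 ++ D2 /\ D = D1 ++ r :: D2)).

Definition S_x2 (D : seq (R * R)) : R := \sum_(p <- D) p.1 ^+ 2.
Definition S_x_x2 (D : seq (R * R)) : R := \sum_(p <- D) (p.1 - p.1 ^+ 2).
Definition S_1_x (D : seq (R * R)) : R := \sum_(p <- D) (1 - p.1).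
Definition S_xy (D : seq (R * R)) : R := \sum_(p <- D) (p.1 * p.2).
Definition S_1_x_y (D : seq (R * R)) : R := \sum_(p <- D) ((1 - p.1) * p.2).
Definition S_1_y (D : seq (R * R)) : R := \sum_(p <- D) (1 - p.2).

(* output space R^6, as nested pairs, with its product (= Borel) sigma-algebra *)
Definition out6 := (R * R * R * R * R * R)%type.

(* Pr[M(D) \in S], where M(D) = stats(D) + (Z11,Z12,Z13,Z21,Z22,Z23) with the
   Z1j ~ Lap(1/eps1), Z2j ~ Lap(1/eps2) all independent: the joint law of the
   noise has the product density, integrated (iteratively, Tonelli) against
   Lebesgue measure. *)
Definition mech_prob (eps1 eps2 : R) (D : seq (R * R)) (S : set out6) : \bar R :=
  (\int[lebesgue_measure]_z11 \int[lebesgue_measure]_z12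
   \int[lebesgue_measure]_z13 \int[lebesgue_measure]_z21
   \int[lebesgue_measure]_z22 \int[lebesgue_measure]_z23
     ((\1_S (S_x2 D + z11, S_x_x2 D + z12, S_1_x D + z13,
              S_xy D + z21, S_1_x_y D + z22, S_1_y D + z23) : R)
      * lap_pdf eps1^-1 z11 * lap_pdf eps1^-1 z12 * lap_pdf eps1^-1 z13
      * lap_pdf eps2^-1 z21 * lap_pdf eps2^-1 z22 * lap_pdf eps2^-1 z23)%:E)%E.

End DP.

From HB Require Import structures.
From mathcomp Require Import all_boot all_order all_algebra.
From mathcomp Require Import all_classical all_reals all_analysis.
From mathcomp Require Import measurable_realfun ring lra.
Set Implicit Arguments. Unset Strict Implicit. Unset Printing Implicit Defensive.
Import Order.TTheory GRing.Theory Num.Theory.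
Local Open Scope classical_set_scope.
Local Open Scope ring_scope.

(* Up to the six statistics s(D), the mechanism adds independent Laplace noise
   whose joint density is proportional to exp(-|z|), for the weighted norm
   |v| = eps1 (|v1| + |v2| + |v3|) + eps2 (|v4| + |v5| + |v6|).  By translation
   invariance of Lebesgue measure, Pr[M(D) in S] is the integral over S of the
   density at u - s(D), and the triangle inequality bounds the ratio of the
   densities at u - s(D) and u - s(D') by exp |s(D) - s(D')|.  A record (x, y)
   of [0,1]^2 contributes x^2, x - x^2, 1 - x, xy, (1 - x) y, 1 - y to the
   statistics: all nonnegative, and each triple sums to 1, so
   |s(D) - s(D')| = eps1 + eps2 for neighbouring datasets. *)

Section translation_invariance.
Variable R : realType.
Local Notation mu := (@lebesgue_measure R).

Lemma lebesgue_measure_shift (a : R) (A : set R) : measurable A ->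
  mu ((fun x => x + a) @^-1` A) = mu A.
Proof.
move=> mA; pose shift : measurableTypeR R -> measurableTypeR R := fun x => x + a.
have mshift : measurable_fun [set: measurableTypeR R] shift by exact: measurable_funD.
pose nu : {measure set (measurableTypeR R) -> \bar R} := pushforward mu shift.
apply/esym/(lebesgue_measure_unique (mu := nu mshift)) => // _ [[x y] _ <-] /=.
change (mu `]x, y] = mu (shift @^-1` `]x, y]%classic)).
have -> : shift @^-1` `]x, y]%classic = `](x - a), (y - a)]%classic.
  by apply/seteqP; split => z /=; rewrite !in_itv /= ltrBlDr lerBrDr.
rewrite !lebesgue_measure_itv /= !lte_fin ltrD2r.
by case: ifP => // _; rewrite -!EFinD opprB addrA subrK.
Qed.

Import HBNNSimple.
Local Open Scope ereal_scope.

Section shifted_nnsfun.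
Variables (h : {nnsfun (measurableTypeR R) >-> R}) (a : R).

Definition shift_fun : measurableTypeR R -> R := fun x => h (x + a)%R.

Let shift_fun_measurable : measurable_fun [set: measurableTypeR R] shift_fun.
Proof.
apply: (measurableT_comp (f := h) (g := fun x : measurableTypeR R => (x + a)%R)) => //.
exact: measurable_funD.
Qed.
HB.instance Definition _ := isMeasurableFun.Build _ _ _ _ shift_fun shift_fun_measurable.

Let shift_fun_finite_image : finite_set (range shift_fun).
Proof. by apply: sub_finite_set (fimfunP h) => _ [x _ <-]; exists (x + a)%R. Qed.
HB.instance Definition _ := FiniteImage.Build _ _ shift_fun shift_fun_finite_image.

Let shift_fun_ge0 x : (0 <= shift_fun x)%R.
Proof. exact: fun_ge0. Qed.
HB.instance Definition _ := isNonNegFun.Build _ _ shift_fun shift_fun_ge0.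

Definition shift_nnsfun : {nnsfun (measurableTypeR R) >-> R} := shift_fun.

Lemma sintegral_shift : sintegral mu shift_nnsfun = sintegral mu h.
Proof.
apply: eq_fsbigr => r _; congr (_ * _).
exact: (lebesgue_measure_shift a (measurable_funPTI h (measurable_set1 r))).
Qed.

End shifted_nnsfun.

Lemma ge0_integral_shift_le (a : R) (f : R -> \bar R) : (forall x, 0 <= f x) ->
  \int[mu]_x f (x + a)%R <= \int[mu]_x f x.
Proof.
move=> f0; rewrite !ge0_integralTE //.
apply: ge_ereal_sup => _ [h /= hf <-]; apply: ereal_sup_ubound.
exists (shift_nnsfun h (- a)); last exact: sintegral_shift.
by move=> x /=; rewrite /shift_fun -[x in f x](subrK a).
Qed.

Lemma ge0_integral_shift (a : R) (f : R -> \bar R) : (forall x, 0 <= f x) ->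
  \int[mu]_x f (x + a)%R = \int[mu]_x f x.
Proof.
move=> f0; apply/eqP; rewrite eq_le ge0_integral_shift_le //=.
have := ge0_integral_shift_le (- a) (fun x => f0 (x + a)%R).
by under eq_integral do rewrite subrK.
Qed.

End translation_invariance.

Section ge0_le_integral_scale.
Local Open Scope ereal_scope.
Context d (T : measurableType d) (R : realType).
Variable mu : {measure set T -> \bar R}.
Import HBNNSimple.

(* No measurability is assumed, so that the lemma applies to the inner
   integrals of an iterated integral; the proof compares the simple functions
   below [f] and [g] directly. *)
Lemma ge0_le_integral_scale (f g : T -> \bar R) (c : R) : (0 < c)%R ->
  (forall x, 0 <= f x) -> (forall x, 0 <= g x) -> (forall x, f x <= c%:E * g x) ->
  \int[mu]_x f x <= c%:E * \int[mu]_x g x.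
Proof.
move=> c0 f0 g0 fg; rewrite !ge0_integralTE //.
apply: ge_ereal_sup => _ [h /= hf <-].
have c'0 : (0 <= c^-1)%R by rewrite invr_ge0 ltW.
have -> : sintegral mu h = c%:E * sintegral mu (scale_nnsfun h c'0).
  by rewrite sintegralrM muleA -EFinM divff ?gt_eqF // mul1e.
rewrite lee_pmul2l ?lte_fin //; apply: ereal_sup_ubound.
exists (scale_nnsfun h c'0) => // x /=.
rewrite EFinM -[g x]mul1e -(@mulVf _ c) ?gt_eqF // EFinM -muleA.
by rewrite lee_wpmul2l ?lee_fin // (le_trans (hf x)).
Qed.

End ge0_le_integral_scale.

Section iterated_integral6.
Local Open Scope ereal_scope.
Variable R : realType.
Local Notation mu := (@lebesgue_measure R).

Definition integral6 (f : out6 R -> \bar R) : \bar R :=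
  \int[mu]_u1 \int[mu]_u2 \int[mu]_u3 \int[mu]_u4 \int[mu]_u5 \int[mu]_u6
    f (u1, u2, u3, u4, u5, u6).

Let integral_shift_eq (a : R) (F G : R -> \bar R) : (forall x, 0 <= G x) ->
  (forall x, F x = G (x + a)%R) -> \int[mu]_x F x = \int[mu]_x G x.
Proof. by move=> G0 FG; rewrite -(ge0_integral_shift a G0); apply: eq_integral => x _. Qed.

Lemma integral6_shift (a : out6 R) (f : out6 R -> \bar R) : (forall u, 0 <= f u) ->
  integral6 (fun u => f (u + a)%R) = integral6 f.
Proof.
case: a => [[[[[a1 a2] a3] a4] a5] a6] f0; rewrite /integral6.
apply: (integral_shift_eq (a := a1)) => [?|u1]; first by repeat apply: integral_ge0 => ? _.
apply: (integral_shift_eq (a := a2)) => [?|u2]; first by repeat apply: integral_ge0 => ? _.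
apply: (integral_shift_eq (a := a3)) => [?|u3]; first by repeat apply: integral_ge0 => ? _.
apply: (integral_shift_eq (a := a4)) => [?|u4]; first by repeat apply: integral_ge0 => ? _.
apply: (integral_shift_eq (a := a5)) => [?|u5]; first by repeat apply: integral_ge0 => ? _.
exact: (integral_shift_eq (a := a6)).
Qed.

Lemma integral6_le_scale (f g : out6 R -> \bar R) (c : R) : (0 < c)%R ->
  (forall u, 0 <= f u) -> (forall u, 0 <= g u) -> (forall u, f u <= c%:E * g u) ->
  integral6 f <= c%:E * integral6 g.
Proof.
move=> c0 f0 g0 fg.
by do 6!(apply: ge0_le_integral_scale => // ?; try by repeat apply: integral_ge0 => ? _).
Qed.

End iterated_integral6.

Section laplace_mechanism.
Variable R : realType.
Implicit Types (v w z s t : out6 R) (S : set (out6 R)).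

Lemma lap_pdfE (e z : R) : lap_pdf e^-1 z = e / 2 * expR (- (e * `|z|)).
Proof. by rewrite /lap_pdf invfM !invrK mulNr (mulrC `|z|) (mulrC 2^-1). Qed.

Definition lap6_norm (e1 e2 : R) v : R :=
  e1 * (`|v.1.1.1.1.1| + `|v.1.1.1.1.2| + `|v.1.1.1.2|)
  + e2 * (`|v.1.1.2| + `|v.1.2| + `|v.2|).

Lemma lap6_normN (e1 e2 : R) v : lap6_norm e1 e2 (- v) = lap6_norm e1 e2 v.
Proof. by rewrite /lap6_norm /= !normrN. Qed.

Lemma lap6_normD (e1 e2 : R) v w : 0 <= e1 -> 0 <= e2 ->
  lap6_norm e1 e2 (v + w) <= lap6_norm e1 e2 v + lap6_norm e1 e2 w.
Proof.
case: v w => [[[[[v1 v2] v3] v4] v5] v6] [[[[[w1 w2] w3] w4] w5] w6] e1_ge0 e2_ge0.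
rewrite /lap6_norm /=.
have := ler_normD v1 w1; have := ler_normD v2 w2; have := ler_normD v3 w3.
have := ler_normD v4 w4; have := ler_normD v5 w5; have := ler_normD v6 w6.
nra.
Qed.

Definition lap6_noise (e1 e2 : R) z : R :=
  lap_pdf e1^-1 z.1.1.1.1.1 * lap_pdf e1^-1 z.1.1.1.1.2 * lap_pdf e1^-1 z.1.1.1.2
  * lap_pdf e2^-1 z.1.1.2 * lap_pdf e2^-1 z.1.2 * lap_pdf e2^-1 z.2.

Lemma lap6_noiseE (e1 e2 : R) z :
  lap6_noise e1 e2 z = (e1 / 2) ^+ 3 * (e2 / 2) ^+ 3 * expR (- lap6_norm e1 e2 z).
Proof. by rewrite /lap6_noise !lap_pdfE /lap6_norm !mulrDr !opprD !expRD; ring. Qed.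

Lemma lap6_noise_ge0 (e1 e2 : R) z : 0 <= e1 -> 0 <= e2 -> 0 <= lap6_noise e1 e2 z.
Proof. by move=> e1_ge0 e2_ge0; rewrite lap6_noiseE !mulr_ge0 ?exprn_ge0 ?expR_ge0. Qed.

Lemma lap6_noise_le (e1 e2 : R) z w : 0 <= e1 -> 0 <= e2 ->
  lap6_noise e1 e2 z <= expR (lap6_norm e1 e2 (w - z)) * lap6_noise e1 e2 w.
Proof.
move=> e1_ge0 e2_ge0; rewrite !lap6_noiseE; set c := (e1 / 2) ^+ 3 * _.
rewrite mulrCA; apply: ler_wpM2l; first by rewrite mulr_ge0 ?exprn_ge0 ?divr_ge0.
rewrite -expRD ler_expR.
have := lap6_normD (w - z) z e1_ge0 e2_ge0; rewrite subrK; lra.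
Qed.

Definition lap6_mech (e1 e2 : R) s S : \bar R :=
  integral6 (fun z => (\1_S (s + z) * lap6_noise e1 e2 z)%:E).

Lemma lap6_mechE (e1 e2 : R) s S : 0 <= e1 -> 0 <= e2 ->
  lap6_mech e1 e2 s S = integral6 (fun u => (\1_S u * lap6_noise e1 e2 (u - s))%:E).
Proof.
move=> e1_ge0 e2_ge0; rewrite /lap6_mech -(integral6_shift (- s)).
  by congr integral6; apply/funext => u; rewrite subrKC.
by move=> z; rewrite lee_fin mulr_ge0 ?lap6_noise_ge0.
Qed.

Lemma lap6_mech_le (e1 e2 : R) s t S : 0 <= e1 -> 0 <= e2 ->
  (lap6_mech e1 e2 s S <= (expR (lap6_norm e1 e2 (s - t)))%:E * lap6_mech e1 e2 t S)%E.
Proof.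
move=> e1_ge0 e2_ge0; have indic_ge0 u : 0 <= \1_S u :> R by rewrite indicE.
rewrite !lap6_mechE //; apply: integral6_le_scale => [|u|u|u].
- exact: expR_gt0.
- by rewrite lee_fin mulr_ge0 ?lap6_noise_ge0.
- by rewrite lee_fin mulr_ge0 ?lap6_noise_ge0.
rewrite -EFinM lee_fin (mulrCA (expR _)); apply: ler_wpM2l => //.
have <- : u - t - (u - s) = s - t by rewrite opprB addrC subrKA.
exact: lap6_noise_le.
Qed.

End laplace_mechanism.

Section statistics.
Variable R : realType.

Definition stats (D : seq (R * R)) : out6 R :=
  (S_x2 D, S_x_x2 D, S_1_x D, S_xy D, S_1_x_y D, S_1_y D).

Lemma stats_cat (D1 D2 : seq (R * R)) : stats (D1 ++ D2) = stats D1 + stats D2.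
Proof. by rewrite /stats /S_x2 /S_x_x2 /S_1_x /S_xy /S_1_x_y /S_1_y !big_cat. Qed.

Lemma lap6_norm_stats1 (e1 e2 : R) (r : R * R) : in_unit_square r ->
  lap6_norm e1 e2 (stats [:: r]) = e1 + e2.
Proof.
case: r => x y [/= /andP[x_ge0 x_le1] /andP[y_ge0 y_le1]].
rewrite /lap6_norm /stats /S_x2 /S_x_x2 /S_1_x /S_xy /S_1_x_y /S_1_y /= !big_seq1.
have x2_le_x : x ^+ 2 <= x by rewrite expr2 ler_piMr.
by rewrite !ger0_norm ?sqr_ge0 ?mulr_ge0 ?subr_ge0 //=; ring.
Qed.

Lemma mech_probE (e1 e2 : R) (D : seq (R * R)) (S : set (out6 R)) :
  mech_prob e1 e2 D S = lap6_mech e1 e2 (stats D) S.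
Proof.
rewrite /mech_prob /lap6_mech /integral6.
by do 6!apply: eq_integral => ? _; rewrite /lap6_noise !mulrA.
Qed.

End statistics.

Unset Implicit Arguments.

Theorem mainTheorem5 (R : realType) (eps1 eps2 : R) :
  0 < eps1 -> 0 < eps2 ->
  forall D D' : seq (R * R),
    valid_dataset D -> valid_dataset D' -> neighboring D D' ->
    forall S : set (out6 R), measurable S ->
      (mech_prob eps1 eps2 D S <= (expR (eps1 + eps2))%:E * mech_prob eps1 eps2 D' S)%E.
Proof.
move=> /ltW eps1_ge0 /ltW eps2_ge0 D D' _ _ [r [D1 [D2 [r_unit DD']]]] S _.
have norm_r : lap6_norm eps1 eps2 (stats (D1 ++ r :: D2) - stats (D1 ++ D2)) = eps1 + eps2.
  by rewrite -cat1s !stats_cat addrCA addrK lap6_norm_stats1.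
rewrite !mech_probE; case: DD' => -[-> ->].
- by rewrite -norm_r -lap6_normN opprB lap6_mech_le.
- by rewrite -norm_r lap6_mech_le.
Qed.
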